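(* Let $\Sigma=\{0,1\}$. For any $D,T\in\mathbb N_+$ there exists $\mathcal F\subseteq\Sigma^{\Sigma^*}$ such that $\mathrm{VCdim}(\mathcal F)=D$ but $\mathrm{VCdim}(\mathcal F^{\mathrm{e2e}(T)})=T\cdot D$ over the domain $\Sigma^n$ with $n=\lceil\log_2(DT)\rceil+1$.
   Context: For $f:\Sigma^*\to\Sigma$, $\bar f(\mathbf x)$ is $\mathbf x$ with $f(\mathbf x)$ appended; $f^{\mathrm{CoT}(T)}=\bar f^{\circ T}$; $f^{\mathrm{e2e}(T)}(\mathbf x)$ is the last token of $f^{\mathrm{CoT}(T)}(\mathbf x)$; $\mathcal F^{\mathrm{e2e}(T)}=\{f^{\mathrm{e2e}(T)}:f\in\mathcal F\}$. $\mathrm{VCdim}$ is the VC dimension ($\mathrm{VCdim}(\mathcal F)$ over the domain $\Sigma^*$; $\mathrm{VCdim}(\mathcal F^{\mathrm{e2e}(T)})$ of the restriction to $\Sigma^n$). *)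

From mathcomp Require Import all_boot.
Set Implicit Arguments. Unset Strict Implicit. Unset Printing Implicit Defensive.

Notation word := (seq bool).

Definition fbar (f : word -> bool) (x : word) : word := rcons x (f x).

Definition CoT (f : word -> bool) (T : nat) (x : word) : word := iter T (fbar f) x.

Definition e2e (f : word -> bool) (T : nat) (x : word) : bool :=
  last false (CoT f T x).

Definition e2e_class (F : (word -> bool) -> Prop) (T : nat) : (word -> bool) -> Prop :=
  fun g => exists f, F f /\ g = e2e f T.

Definition shatters {X : eqType} (H : (X -> bool) -> Prop) (dom : X -> Prop)
    (S : seq X) : Prop :=
  uniq S /\ (forall x, x \in S -> dom x) /\
  forall lab : X -> bool, exists h, H h /\ forall x, x \in S -> h x = lab x.

Definition VCdim_eq {X : eqType} (H : (X -> bool) -> Prop) (dom : X -> Prop)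
    (d : nat) : Prop :=
  (exists S, shatters H dom S /\ size S = d) /\
  (forall S, shatters H dom S -> size S <= d).

From mathcomp Require Import all_boot.
Set Implicit Arguments. Unset Strict Implicit. Unset Printing Implicit Defensive.

(* Each function of the class hides one word [P j] for each of D blocks of T
   prompts.  On the t-th prompt of block j it outputs 1 exactly when the
   continuation written after the prompt follows [P j] for t bits and bit t of
   [P j] is 1.  The inputs accepted in one block are thus totally ordered by the
   prefix order of their probes, so a shattered set meets each block at most
   once and has at most D points.  Under chain of thought, however, the
   function writes the bits of [P j] one after the other, and after T steps its
   answer on the t-th prompt of block j is bit t of [P j]: all D * T prompts can
   be labelled independently, while no other word of length n is ever
   accepted. *)

Lemma prefix_total (A : eqType) (u v p : seq A) :
  prefix u p -> prefix v p -> prefix u v || prefix v u.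
Proof.
rewrite !prefixE => /eqP up /eqP vp.
case: (leqP (size u) (size v)) => [uv | /ltnW vu]; apply/orP.
  by left; rewrite -vp take_takel // up.
by right; rewrite -up take_takel // vp.
Qed.

Lemma prefix_rcons_take (p : word) m :
  m < size p -> prefix (rcons (take m p) true) p = nth false p m.
Proof.
move=> ltmp; rewrite prefixE size_rcons size_takel ?(ltnW ltmp) //.
by rewrite (take_nth false ltmp) eqseq_rcons eqxx /=; case: (nth false p m).
Qed.

Lemma CoT_cat f T x : exists c, CoT f T x = x ++ c.
Proof.
elim: T => [|T [c IH]]; first by exists [::]; rewrite cats0.
exists (rcons c (f (x ++ c))).
by rewrite /CoT iterS -/(CoT f T x) IH /fbar rcons_cat.
Qed.

Lemma e2eS f T x : e2e f T.+1 x = f (CoT f T x).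
Proof. by rewrite /e2e /CoT iterS /fbar last_rcons. Qed.

Lemma e2e_cat f T x : 0 < T -> exists c, e2e f T x = f (x ++ c).
Proof.
case: T => // T _; have [c CoTx] := CoT_cat f T x.
by exists c; rewrite e2eS CoTx.
Qed.

Lemma CoT_mkseq f (g : nat -> bool) x T :
  (forall s, s < T -> f (x ++ mkseq g s) = g s) -> CoT f T x = x ++ mkseq g T.
Proof.
elim: T => [|T IH] fg; first by rewrite cats0.
rewrite /CoT iterS -/(CoT f T x) IH => [|s ltsT]; last exact/fg/ltnW.
by rewrite /fbar fg // /mkseq -addn1 iotaD map_cat cats1 rcons_cat.
Qed.

Lemma e2e_mkseq f (g : nat -> bool) x T : 0 < T ->
  (forall s, s < T -> f (x ++ mkseq g s) = g s) -> e2e f T x = g T.-1.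
Proof.
case: T => // T _ fg.
by rewrite e2eS (CoT_mkseq (fun s ltsT => fg s (ltnW ltsT))) fg.
Qed.

Lemma shatters_size_le_support (X : eqType) H (dom : X -> Prop) (S A : seq X) :
  shatters H dom S -> (forall h x, H h -> dom x -> h x -> x \in A) ->
  size S <= size A.
Proof.
move=> [uS [domS shS]] supp; apply: uniq_leq_size => // x Sx.
have [h [Hh hS]] := shS (fun _ => true).
by apply: supp Hh (domS x Sx) _; rewrite hS.
Qed.

Definition words n : seq word := [seq val t | t <- enum {: n.-tuple bool}].

Lemma size_words n : size (words n) = 2 ^ n.
Proof. by rewrite size_map -cardE card_tuple card_bool. Qed.

Lemma words_uniq n : uniq (words n).
Proof. by rewrite map_inj_uniq ?enum_uniq //; apply: val_inj. Qed.

Lemma mem_words n x : (x \in words n) = (size x == n).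
Proof.
apply/mapP/eqP => [[t _ ->] | xn]; first exact: size_tuple.
by exists (Tuple (introT eqP xn)); rewrite ?mem_enum.
Qed.

Section ChainClass.

Variables D T n : nat.
Hypotheses (T_gt0 : 0 < T) (DT_le : D * T <= 2 ^ n).

Definition prompt k := nth [::] (words n) k.

Definition address (w : word) := index (take n w) (words n).

Definition block w := address w %/ T.

Definition depth w := address w %% T.

Definition probe w := rcons (take (depth w) (drop n w)) true.

Definition chain (P : nat -> word) w :=
  (address w < D * T) && prefix (probe w) (P (block w)).

Definition chain_class (f : word -> bool) := exists P, f = chain P.

Lemma size_prompt k : k < 2 ^ n -> size (prompt k) = n.
Proof. by move=> ltk; apply/eqP; rewrite -mem_words mem_nth ?size_words. Qed.

Lemma address_cat x c : size x = n -> address (x ++ c) = address x.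
Proof. by move=> xn; rewrite /address take_size_cat // take_oversize ?xn. Qed.

Lemma address_prompt k : k < 2 ^ n -> address (prompt k) = k.
Proof.
move=> ltk; rewrite /address take_oversize ?size_prompt //.
by rewrite index_uniq ?size_words ?words_uniq.
Qed.

Lemma prompt_address x : size x = n -> prompt (address x) = x.
Proof.
move=> xn; rewrite /prompt /address take_oversize ?xn //.
by rewrite nth_index // mem_words xn.
Qed.

Lemma map_prompt_uniq s :
  uniq s -> (forall k, k \in s -> k < 2 ^ n) -> uniq (map prompt s).
Proof.
move=> us lts; rewrite map_inj_in_uniq // => k l sk sl eqkl.
by rewrite -(address_prompt (lts k sk)) eqkl address_prompt ?lts.
Qed.

Lemma chain_prompt_cat P k c : k < D * T ->
  chain P (prompt k ++ c) = prefix (rcons (take (k %% T) c) true) (P (k %/ T)).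
Proof.
move=> ltk; have ltkn : k < 2 ^ n by apply: leq_trans DT_le.
rewrite /chain /probe /block /depth address_cat ?size_prompt //.
by rewrite address_prompt // ltk drop_size_cat ?size_prompt.
Qed.

(* Bits generated after the t-th prompt of block j: those of [P j] up to
   position t, then bit t repeated. *)
Definition readout (p : word) t i := nth false p (minn i t).

Lemma chain_readout P k s : k < D * T -> k %% T < size (P (k %/ T)) ->
  chain P (prompt k ++ mkseq (readout (P (k %/ T)) (k %% T)) s)
  = readout (P (k %/ T)) (k %% T) s.
Proof.
move=> ltk; rewrite chain_prompt_cat //.
set p := P _; set t := k %% T => ltt.
have ltm : minn s t < size p by rewrite (leq_ltn_trans (geq_minr _ _)).
have -> : take t (mkseq (readout p t) s) = take (minn s t) p.
  rewrite -map_take take_iota minnC -(map_nth_iota0 false (ltnW ltm)).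
  apply/eq_in_map => i; rewrite mem_iota leq_min => /andP[_ /andP[_ ltit]].
  by rewrite /readout (minn_idPl (ltnW ltit)).
exact: prefix_rcons_take.
Qed.

Lemma chain_class_shatters : shatters chain_class (fun _ => True)
  (map prompt [seq j * T | j <- iota 0 D]).
Proof.
have ltjT j : j \in iota 0 D -> j * T < D * T.
  by rewrite mem_iota ltn_pmul2r.
split; [|split=> //].
  rewrite map_prompt_uniq ?map_inj_uniq ?iota_uniq //.
    by move=> i j /eqP; rewrite eqn_pmul2r // => /eqP.
  by move=> _ /mapP[j /ltjT ltj ->]; apply: leq_trans DT_le.
move=> lab; pose P j := [:: lab (prompt (j * T))].
exists (chain P); split; first by exists P.
move=> _ /mapP[_ /mapP[j /ltjT ltj ->] ->].
by have := chain_readout (P := P) 0 ltj; rewrite modnMl mulnK // cats0; apply.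
Qed.

Lemma chain_class_shatters_size S dom :
  shatters chain_class dom S -> size S <= D.
Proof.
move=> [uS [_ shS]].
have [_ [[P0 ->] accept0]] := shS (fun _ => true).
have accept0P w : w \in S ->
    address w < D * T /\ prefix (probe w) (P0 (block w)).
  by move=> Sw; apply/andP; apply: accept0.
have probe_inj a b : a \in S -> b \in S -> block a = block b ->
    prefix (probe a) (probe b) -> a = b.
  move=> Sa Sb eqab pab; apply/eqP/negPn/negP => neqab.
  have [_ [[P ->] accept]] := shS (fun w => w == b).
  move: (accept a Sa) (accept b Sb); rewrite eqxx (negbTE neqab) /chain eqab.
  move=> rejecta /andP[_ /(prefix_trans pab) pa].
  by rewrite (accept0P a Sa).1 pa in rejecta.
rewrite -(size_map block) -(size_iota 0 D); apply: uniq_leq_size.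
  rewrite map_inj_in_uniq // => a b Sa Sb eqab.
  have [_ pa] := accept0P a Sa; have [_ pb] := accept0P b Sb.
  rewrite eqab in pa.
  case/orP: (prefix_total pa pb) => [pab | pba].
    exact: probe_inj a b Sa Sb eqab pab.
  exact/esym/(probe_inj b a Sb Sa (esym eqab) pba).
move=> _ /mapP[w Sw ->]; rewrite mem_iota /block ltn_divLR //.
exact: (accept0P w Sw).1.
Qed.

Lemma chain_class_VCdim : VCdim_eq chain_class (fun _ => True) D.
Proof.
split; last by move=> S; apply: chain_class_shatters_size.
by exists (map prompt [seq j * T | j <- iota 0 D]); rewrite !size_map size_iota;
  split; first exact: chain_class_shatters.
Qed.

Lemma e2e_chain_class_shatters :
  shatters (e2e_class chain_class T) (fun x => size x = n)
    (map prompt (iota 0 (D * T))).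
Proof.
have ltk k : k \in iota 0 (D * T) -> k < D * T by rewrite mem_iota.
split; [|split].
- by rewrite map_prompt_uniq ?iota_uniq // => k /ltk/leq_trans; apply.
- by move=> _ /mapP[k /ltk/leq_trans ltkn ->]; rewrite size_prompt ?ltkn.
move=> lab; pose P j := mkseq (fun t => lab (prompt (j * T + t))) T.
exists (e2e (chain P) T); split.
  by exists (chain P); split => //; exists P.
move=> _ /mapP[k /ltk ltkDT ->].
have ltkT : k %% T < size (P (k %/ T)) by rewrite size_mkseq ltn_pmod.
rewrite (e2e_mkseq T_gt0 (fun s _ => chain_readout s ltkDT ltkT)).
have leTt : k %% T <= T.-1 by rewrite -ltnS prednK // ltn_pmod.
by rewrite /readout (minn_idPr leTt) nth_mkseq ?ltn_pmod // -divn_eq.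
Qed.

Lemma e2e_chain_class_shatters_size S :
  shatters (e2e_class chain_class T) (fun x => size x = n) S -> size S <= D * T.
Proof.
move=> shS; rewrite -(size_iota 0 (D * T)) -(size_map prompt).
apply: (shatters_size_le_support shS) => _ x [_ [[P ->] ->]] xn.
have [c ->] := e2e_cat (chain P) x T_gt0.
case/andP; rewrite address_cat // => ltx _.
by rewrite -(prompt_address xn) map_f // mem_iota.
Qed.

Lemma e2e_chain_class_VCdim :
  VCdim_eq (e2e_class chain_class T) (fun x => size x = n) (T * D).
Proof.
rewrite mulnC; split; last by move=> S; apply: e2e_chain_class_shatters_size.
by exists (map prompt (iota 0 (D * T))); rewrite size_map size_iota;
  split; first exact: e2e_chain_class_shatters.
Qed.

End ChainClass.

Theorem theoremE1 (D T : nat) :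
  0 < D -> 0 < T ->
  exists F : (word -> bool) -> Prop,
    VCdim_eq F (fun _ => True) D /\
    VCdim_eq (e2e_class F T) (fun x => size x = (up_log 2 (D * T)).+1) (T * D).
Proof.
move=> _ T_gt0; set n := (up_log 2 (D * T)).+1.
have DT_le : D * T <= 2 ^ n.
  by apply: leq_trans (up_logP _ (isT : 1 < 2)) _; rewrite expnS leq_pmull.
exists (chain_class D T n); split.
  exact: chain_class_VCdim.
exact: e2e_chain_class_VCdim.
Qed.
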